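(* Let $\xi>0$ be real, let $b\ge0$ and $N\ge2$ be integers, and for integers $0\le d\le N-1$ and $0\le l\le 2d$ put \begin{equation*} f_{d,l} = \exp\left(\frac{(2b+1)(d^2+d)\xi}{2N}\right) \cdot 2\sinh\left(\frac{(2d+1)\xi}{2N}\right) \cdot \prod_{k=1}^{l}4 \sinh\left(\frac{(2d+1+k)\xi}{2N}\right) \sinh\left(\frac{(2d+1-k)\xi}{2N}\right). \end{equation*} Define $S:=(-1)^{N-1}\sum_{d=0}^{N-1}\sum_{l=0}^{2d}(-1)^{d}f_{d,l}$. Then \begin{equation*} S>(1-e^{-\xi/2})\sum_{l=0}^{2N-2}f_{N-1,l}. \end{equation*} *)

From Stdlib Require Import Reals.
Open Scope R_scope.

Fixpoint rsum (n : nat) (F : nat -> R) : R :=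
  match n with O => 0 | S m => rsum m F + F m end.

Fixpoint rprod1 (l : nat) (F : nat -> R) : R :=
  match l with O => 1 | S m => rprod1 m F * F (S m) end.

Definition f_dl (xi : R) (b N d l : nat) : R :=
  exp ((2 * INR b + 1) * (INR d ^ 2 + INR d) * xi / (2 * INR N)) *
  (2 * sinh ((2 * INR d + 1) * xi / (2 * INR N))) *
  rprod1 l (fun k => 4 * sinh ((2 * INR d + 1 + INR k) * xi / (2 * INR N))
                       * sinh ((2 * INR d + 1 - INR k) * xi / (2 * INR N))).

Definition S_sum (xi : R) (b N : nat) : R :=
  (-1) ^ (N - 1) *
  rsum N (fun d => rsum (2 * d + 1) (fun l => (-1) ^ d * f_dl xi b N d l)).

(* Put F d := sum_{l <= 2d} f_{d,l}, so that S = F(N-1) - F(N-2) + F(N-3) - ... .  From d to d+1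
   the exponential prefactor of f_{d,l} grows by exactly exp((2b+1)(2d+2) xi/(2N)), every sinh
   factor grows, and F gains two positive terms; hence F is increasing and, for d = N-2,
   F(N-2) < exp(-xi/2) F(N-1).  The alternating tail of an increasing nonnegative sequence lies
   in [0, F m], so S >= F(N-1) - F(N-2) > (1 - exp(-xi/2)) F(N-1). *)

From Stdlib Require Import Reals Lra Lia.
Open Scope R_scope.

Lemma exp_le_compat x y : x <= y -> exp x <= exp y.
Proof.
  intros [Hlt | ->]; [left; apply exp_increasing; exact Hlt | right; reflexivity].
Qed.

Lemma sinh_pos x : 0 < x -> 0 < sinh x.
Proof. intros Hx. rewrite <- sinh_0. apply sinh_lt, Hx. Qed.

Lemma rsum_ext n F G : (forall i, (i < n)%nat -> F i = G i) -> rsum n F = rsum n G.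
Proof.
  induction n as [|n IH]; intros HFG; simpl; [reflexivity|].
  rewrite IH by (intros; apply HFG; lia). rewrite HFG by lia. reflexivity.
Qed.

Lemma rsum_le n F G : (forall i, (i < n)%nat -> F i <= G i) -> rsum n F <= rsum n G.
Proof.
  induction n as [|n IH]; intros HFG; simpl; [lra|].
  apply Rplus_le_compat; [apply IH; intros; apply HFG | apply HFG]; lia.
Qed.

Lemma rsum_scal n c F : rsum n (fun i => c * F i) = c * rsum n F.
Proof. induction n as [|n IH]; simpl; [ring | rewrite IH; ring]. Qed.

Lemma rsum_pos n F : (forall i, (i < S n)%nat -> 0 < F i) -> 0 < rsum (S n) F.
Proof.
  intros HF. simpl.
  assert (0 <= rsum n F).
  { rewrite <- (Rmult_0_l (rsum n F)), <- rsum_scal.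
    apply rsum_le. intros i Hi. rewrite Rmult_0_l. left; apply HF; lia. }
  assert (0 < F n) by (apply HF; lia).
  lra.
Qed.

Lemma rprod1_ext l G H : (forall k, (1 <= k <= l)%nat -> G k = H k) ->
  rprod1 l G = rprod1 l H.
Proof.
  induction l as [|l IH]; intros HGH; simpl; [reflexivity|].
  rewrite IH by (intros; apply HGH; lia). rewrite HGH by lia. reflexivity.
Qed.

Lemma rprod1_pos l G : (forall k, (1 <= k <= l)%nat -> 0 < G k) -> 0 < rprod1 l G.
Proof.
  induction l as [|l IH]; intros HG; simpl; [lra|].
  apply Rmult_lt_0_compat; [apply IH; intros; apply HG | apply HG]; lia.
Qed.

Lemma rprod1_le l G H : (forall k, (1 <= k <= l)%nat -> 0 < G k <= H k) ->
  rprod1 l G <= rprod1 l H.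
Proof.
  induction l as [|l IH]; intros HGH; simpl; [lra|].
  assert (0 < rprod1 l G) by (apply rprod1_pos; intros; apply HGH; lia).
  assert (0 < G (S l) <= H (S l)) by (apply HGH; lia).
  apply Rmult_le_compat; try lra.
  apply IH. intros; apply HGH; lia.
Qed.

Section AlternatingSum.
Variable F : nat -> R.

Definition alt_sum m := (-1) ^ m * rsum (S m) (fun d => (-1) ^ d * F d).

Lemma alt_sum_S m : alt_sum (S m) = F (S m) - alt_sum m.
Proof.
  unfold alt_sum. cbn [rsum].
  assert (Hsq : (-1) ^ m * (-1) ^ m = 1)
    by (rewrite <- Rpow_mult_distr; replace (-1 * -1) with 1 by ring; apply pow1).
  simpl pow. rewrite Rmult_plus_distr_l.
  replace (-1 * (-1) ^ m * (-1 * (-1) ^ m * F (S m))) with ((-1) ^ m * (-1) ^ m * F (S m))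
    by ring.
  rewrite Hsq. ring.
Qed.

Hypothesis F0_nonneg : 0 <= F 0.
Hypothesis F_nondecr : forall d, F d <= F (S d).

Lemma alt_sum_bounds m : 0 <= alt_sum m <= F m.
Proof.
  induction m as [|m IH].
  - unfold alt_sum. simpl. lra.
  - rewrite alt_sum_S. specialize (F_nondecr m). lra.
Qed.

Lemma alt_sum_S_gt m q : F m < q * F (S m) -> (1 - q) * F (S m) < alt_sum (S m).
Proof.
  intros Hq. rewrite alt_sum_S, Rmult_minus_distr_r, Rmult_1_l.
  pose proof (alt_sum_bounds m). lra.
Qed.

End AlternatingSum.

Section Terms.
Variables (x c : R).
Hypothesis x_pos : 0 < x.
Hypothesis c_nonneg : 0 <= c.

Definition pair_factor d k :=
  4 * sinh ((2 * INR d + 1 + INR k) * x) * sinh ((2 * INR d + 1 - INR k) * x).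

Definition term d l :=
  exp (c * (INR d ^ 2 + INR d) * x) * (2 * sinh ((2 * INR d + 1) * x)) *
  rprod1 l (pair_factor d).

Definition row d := rsum (2 * d + 1) (term d).

Lemma pair_factor_pos d k : (k <= 2 * d)%nat -> 0 < pair_factor d k.
Proof.
  intros Hk. apply le_INR in Hk. rewrite mult_INR in Hk. simpl in Hk.
  pose proof (pos_INR k).
  unfold pair_factor. apply Rmult_lt_0_compat; [apply Rmult_lt_0_compat; [lra|] |];
    apply sinh_pos, Rmult_lt_0_compat; lra.
Qed.

Lemma pair_factor_lt_succ d k : (k <= 2 * d)%nat -> pair_factor d k < pair_factor (S d) k.
Proof.
  intros Hk. apply le_INR in Hk. rewrite mult_INR in Hk. simpl in Hk.
  pose proof (pos_INR k).
  unfold pair_factor. rewrite S_INR.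
  assert (0 < sinh ((2 * INR d + 1 + INR k) * x)) by (apply sinh_pos, Rmult_lt_0_compat; lra).
  assert (0 < sinh ((2 * INR d + 1 - INR k) * x)) by (apply sinh_pos, Rmult_lt_0_compat; lra).
  assert (sinh ((2 * INR d + 1 + INR k) * x) < sinh ((2 * (INR d + 1) + 1 + INR k) * x))
    by (apply sinh_lt, Rmult_lt_compat_r; lra).
  assert (sinh ((2 * INR d + 1 - INR k) * x) < sinh ((2 * (INR d + 1) + 1 - INR k) * x))
    by (apply sinh_lt, Rmult_lt_compat_r; lra).
  nra.
Qed.

Lemma term_pos d l : (l <= 2 * d)%nat -> 0 < term d l.
Proof.
  intros Hl. pose proof (pos_INR d).
  unfold term. apply Rmult_lt_0_compat; [apply Rmult_lt_0_compat|].
  - apply exp_pos.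
  - assert (0 < sinh ((2 * INR d + 1) * x)) by (apply sinh_pos, Rmult_lt_0_compat; lra).
    lra.
  - apply rprod1_pos. intros; apply pair_factor_pos; lia.
Qed.

Lemma term_le_succ d l : (l <= 2 * d)%nat ->
  term d l <= exp (- (c * (2 * INR d + 2) * x)) * term (S d) l.
Proof.
  intros Hl. pose proof (pos_INR d).
  assert (Hexp : exp (c * (INR d ^ 2 + INR d) * x) =
                 exp (- (c * (2 * INR d + 2) * x)) * exp (c * (INR (S d) ^ 2 + INR (S d)) * x)).
  { rewrite <- exp_plus, S_INR. f_equal. ring. }
  assert (Hsinh : 0 < sinh ((2 * INR d + 1) * x) < sinh ((2 * INR (S d) + 1) * x)).
  { rewrite S_INR. split; [apply sinh_pos, Rmult_lt_0_compat | apply sinh_lt, Rmult_lt_compat_r];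
      lra. }
  assert (Hprod : rprod1 l (pair_factor d) <= rprod1 l (pair_factor (S d))).
  { apply rprod1_le. intros k Hk. split; [apply pair_factor_pos; lia|].
    left; apply pair_factor_lt_succ; lia. }
  assert (0 < rprod1 l (pair_factor d)) by (apply rprod1_pos; intros; apply pair_factor_pos; lia).
  pose proof (exp_pos (- (c * (2 * INR d + 2) * x))).
  pose proof (exp_pos (c * (INR (S d) ^ 2 + INR (S d)) * x)).
  assert (Hgrowth : sinh ((2 * INR d + 1) * x) * rprod1 l (pair_factor d) <=
                     sinh ((2 * INR (S d) + 1) * x) * rprod1 l (pair_factor (S d)))
    by (apply Rmult_le_compat; lra).
  unfold term. rewrite Hexp.
  set (e := exp (- (c * (2 * INR d + 2) * x))) in *.
  set (E := exp (c * (INR (S d) ^ 2 + INR (S d)) * x)) in *.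
  assert (0 < e * E) by (apply Rmult_lt_0_compat; assumption).
  nra.
Qed.

Lemma row_pos d : 0 < row d.
Proof.
  unfold row. rewrite Nat.add_1_r.
  apply rsum_pos. intros; apply term_pos; lia.
Qed.

Lemma row_lt_succ d : row d < exp (- (c * (2 * INR d + 2) * x)) * row (S d).
Proof.
  unfold row. replace (2 * S d + 1)%nat with (S (S (2 * d + 1))) by lia. cbn [rsum].
  assert (Hrow : rsum (2 * d + 1) (term d) <=
                 rsum (2 * d + 1) (fun l => exp (- (c * (2 * INR d + 2) * x)) * term (S d) l))
    by (apply rsum_le; intros; apply term_le_succ; lia).
  rewrite rsum_scal in Hrow.
  pose proof (exp_pos (- (c * (2 * INR d + 2) * x))).
  assert (0 < term (S d) (2 * d + 1)) by (apply term_pos; lia).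
  assert (0 < term (S d) (S (2 * d + 1))) by (apply term_pos; lia).
  nra.
Qed.

Lemma row_le_succ d : row d <= row (S d).
Proof.
  pose proof (pos_INR d).
  assert (Hexp : exp (- (c * (2 * INR d + 2) * x)) <= 1).
  { rewrite <- exp_0. apply exp_le_compat.
    assert (0 <= c * (2 * INR d + 2) * x) by (apply Rmult_le_pos; [apply Rmult_le_pos|]; lra).
    lra. }
  pose proof (row_lt_succ d). pose proof (row_pos (S d)).
  nra.
Qed.

End Terms.

Lemma f_dl_term xi b N d l :
  f_dl xi b N d l = term (xi / (2 * INR N)) (2 * INR b + 1) d l.
Proof.
  unfold f_dl, term. rewrite !Rmult_div_assoc. f_equal.
  apply rprod1_ext. intros k _. unfold pair_factor. rewrite !Rmult_div_assoc. reflexivity.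
Qed.

Lemma rsum_f_dl_row xi b N d :
  rsum (2 * d + 1) (fun l => f_dl xi b N d l) = row (xi / (2 * INR N)) (2 * INR b + 1) d.
Proof. apply rsum_ext. intros; apply f_dl_term. Qed.

Lemma S_sum_alt_sum xi b n :
  S_sum xi b (S n) = alt_sum (row (xi / (2 * INR (S n))) (2 * INR b + 1)) n.
Proof.
  unfold S_sum, alt_sum. rewrite Nat.sub_1_r. simpl Nat.pred. f_equal.
  apply rsum_ext. intros d _. rewrite rsum_scal, rsum_f_dl_row. reflexivity.
Qed.

Theorem lemma3p3 (xi : R) (b N : nat) (hxi : 0 < xi) (hN : (2 <= N)%nat) :
  S_sum xi b N >
  (1 - exp (- xi / 2)) * rsum (2 * N - 1) (fun l => f_dl xi b N (N - 1) l).
Proof.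
  destruct N as [|[|m]]; [lia | lia|].
  replace (2 * S (S m) - 1)%nat with (2 * S m + 1)%nat by lia.
  replace (S (S m) - 1)%nat with (S m) by lia.
  rewrite S_sum_alt_sum, rsum_f_dl_row.
  set (x := xi / (2 * INR (S (S m)))). set (c := 2 * INR b + 1).
  pose proof (pos_INR m). pose proof (pos_INR b).
  assert (Hx : 0 < x) by (unfold x; rewrite !S_INR; apply Rdiv_lt_0_compat; lra).
  assert (Hgap : xi / 2 <= c * (2 * INR m + 2) * x).
  { replace (xi / 2) with ((INR m + 2) * x) by (unfold x; rewrite !S_INR; field; lra).
    apply Rmult_le_compat_r; unfold c; nra. }
  apply Rle_lt_trans with ((1 - exp (- (c * (2 * INR m + 2) * x))) * row x c (S m)).
  - apply Rmult_le_compat_r; [left; apply row_pos; lra|].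
    assert (exp (- (c * (2 * INR m + 2) * x)) <= exp (- xi / 2)) by (apply exp_le_compat; lra).
    lra.
  - apply alt_sum_S_gt.
    + left; apply row_pos; unfold c; lra.
    + apply row_le_succ; unfold c; lra.
    + apply row_lt_succ; unfold c; lra.
Qed.
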